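(* Let $\varepsilon>0$, $p\in(0,1/2)$, and $R=1-H(p)-\varepsilon$. Let $\mathcal{C}\subseteq\mathbb{F}_2^n$ be a random linear code of rate $R$. Then with probability $1-\exp(-\Omega_\varepsilon(n))$, $\mathcal{C}$ satisfies $S_{\mathcal{C}}\le 2$.
   Context: $H(p)=-p\log_2 p-(1-p)\log_2(1-p)$. $L_{\mathcal{C}}(x)=|\{c\in\mathcal{C}:\Delta(x,c)\le pn\}|$ with $\Delta$ Hamming distance; $A_{\mathcal{C}}(x)=2^{\frac{\varepsilon n L_{\mathcal{C}}(x)}{1+\varepsilon}}$ and $S_{\mathcal{C}}=\mathbb{E}_{x\sim\mathbb{F}_2^n}[A_{\mathcal{C}}(x)]$ ($x$ uniform). A random linear code of rate $R$ is $\mathrm{span}(b_1,\dots,b_k)$ with $k=Rn$ (an integer) and $b_i$ independent uniform in $\mathbb{F}_2^n$. *)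

From HB Require Import structures.
From mathcomp Require Import all_boot all_order all_algebra.
From Stdlib Require Import Reals.
Set Implicit Arguments. Unset Strict Implicit. Unset Printing Implicit Defensive.

Definition log2 (x : R) : R := (ln x / ln 2)%R.
Definition Hbin (p : R) : R := (- p * log2 p - (1 - p) * log2 (1 - p))%R.

Definition hdist (n : nat) (x y : 'rV['F_2]_n) : nat :=
  #|[set i : 'I_n | x ord0 i != y ord0 i]|.

Definition span_code (k n : nat) (B : 'M['F_2]_(k, n)) : {set 'rV['F_2]_n} :=
  [set mulmx a B | a : 'rV['F_2]_k].

Definition Lcount (n : nat) (p : R) (C : {set 'rV['F_2]_n}) (x : 'rV['F_2]_n) : nat :=
  #|[set c in C | Rle_dec (INR (hdist x c)) (p * INR n)%R]|.

Definition Aval (n : nat) (p eps : R) (C : {set 'rV['F_2]_n}) (x : 'rV['F_2]_n) : R :=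
  Rpower 2 (eps * INR n * INR (Lcount p C x) / (1 + eps))%R.

Definition Sval (n : nat) (p eps : R) (C : {set 'rV['F_2]_n}) : R :=
  ((\big[Rplus/0%R]_(x : 'rV['F_2]_n) Aval p eps C x) / INR #|{: 'rV['F_2]_n}|)%R.

(* Probability, over b_1..b_k independent uniform in F_2^n (i.e. B uniform in
   'M_(k,n)), that the random linear code span(b_1..b_k) has S_C > 2. *)
Definition prob_bad (n k : nat) (p eps : R) : R :=
  ((\big[Rplus/0%R]_(B : 'M['F_2]_(k, n))
      (if Rle_dec (Sval p eps (span_code B)) 2 then 0 else 1)%R)
   / INR #|{: 'M['F_2]_(k, n)}|)%R.

(* Let u(C) = S_C - 1 >= 0.  A ball around x meets C + <b> only in C and in
   C + b, so A_{C+<b>}(x) <= A_C(x) A_C(x + b); averaging over x and a uniform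
   new generator b gives E_b u(C + <b>) <= 2 u(C) + u(C)^2.  Thus while u stays
   below a threshold th it grows in expectation by a factor at most 2 + th per
   generator, and stopping the process at th gives
   P(u(C_k) >= th) <= (2 + th)^k u({0}) / th.  Finally
   u({0}) <= 2^(eps n/(1+eps)) |Ball(p n)| / 2^n <= 2^((eps/(1+eps) + H(p) - 1) n),
   so for k = (1 - H(p) - eps) n the bound is e^(th k/2) 2^(-eps^2 n/(1+eps)) / th,
   exponentially small once th is small. *)

From HB Require Import structures.
From mathcomp Require Import all_boot all_order all_algebra.
From Stdlib Require Import Reals Lra.
Set Implicit Arguments. Unset Strict Implicit. Unset Printing Implicit Defensive.
Import GRing.Theory.

Section BinaryCodes.
Local Open Scope ring_scope.
Variable n : nat.
Implicit Types (x y b c : 'rV['F_2]_n).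

Lemma F2_cases (a : 'F_2) : a = 0 \/ a = 1.
Proof.
case: a => [[|[|m]] lt_m2]; [left | right |]; try exact/val_inj.
by move: lt_m2; rewrite /= (@pdiv_id 2).
Qed.

Lemma opp_rowF2 b : - b = b.
Proof. by apply/rowP => i; rewrite mxE oppr_pchar2 // pchar_Fp. Qed.

Lemma hdist_addr x y b : hdist (x + b) (y + b) = hdist x y.
Proof. by apply: eq_card => i; rewrite !inE !mxE (inj_eq (@addIr _ _)). Qed.

Lemma span_code_col k b (B : 'M['F_2]_(k, n)) c :
  c \in span_code (col_mx b B : 'M_(1 + k, n)) ->
  c \in span_code B \/ c + b \in span_code B.
Proof.
case/imsetP => a _ ->; rewrite -[a](hsubmxK (a : 'M_(1, 1 + k))) mul_row_col.
rewrite [lsubmx _]mx11_scalar mul_scalar_mx.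
have inB : rsubmx (a : 'M_(1, 1 + k)) *m B \in span_code B by apply: imset_f.
case: (F2_cases (lsubmx (a : 'M_(1, 1 + k)) 0 0)) => ->; [left | right].
  by rewrite scale0r add0r.
by rewrite scale1r addrC addrA -{2}(opp_rowF2 b) subrr add0r.
Qed.

(* The ball around [x] meets [span (b, B)] only in translates of its
   intersections with [span B] around [x] and around [x + b]. *)
Lemma Lcount_col k p b x (B : 'M['F_2]_(k, n)) :
  leq (Lcount p (span_code (col_mx b B : 'M_(1 + k, n))) x)
      (Lcount p (span_code B) x + Lcount p (span_code B) (x + b)).
Proof.
rewrite /Lcount; set S1 := [set c in span_code B | Rle_dec (INR (hdist x c)) _].
set S2 := [set c in span_code B | Rle_dec (INR (hdist (x + b) c)) _].
apply: leq_trans (_ : leq #|S1 :|: [set c + b | c in S2]| _).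
  apply: subset_leq_card; apply/subsetP => c; rewrite inE => /andP [Cc Dc].
  rewrite inE; case: (span_code_col Cc) => Bc; first by rewrite inE Bc Dc.
  apply/orP; right; apply/imsetP; exists (c + b); first by rewrite inE Bc hdist_addr.
  by rewrite -addrA -{2}(opp_rowF2 b) subrr addr0.
by apply: leq_trans (leq_card_setU _ _) _; rewrite leq_add2l leq_imset_card.
Qed.

Lemma span_code_empty : span_code (0 : 'M['F_2]_(0, n)) = [set 0].
Proof.
apply/setP => c; rewrite inE; apply/imsetP/eqP => [[a _ ->]|->].
  by rewrite mulmx0.
by exists 0; rewrite ?mulmx0.
Qed.

Lemma Lcount_empty p x :
  Lcount p (span_code (0 : 'M['F_2]_(0, n))) x =
  if Rle_dec (INR (hdist x 0)) (p * INR n) then 1%N else 0%N.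
Proof.
rewrite /Lcount span_code_empty.
case: Rle_dec => d0 /=;
  [rewrite -[RHS](cards1 (0 : 'rV['F_2]_n)) | rewrite -[RHS](cards0 'rV['F_2]_n)];
  by apply: eq_card => c; rewrite !inE; case: (eqVneq c 0) => [->|] //=; case: Rle_dec.
Qed.

Lemma hdist_le x y : leq (hdist x y) n.
Proof. by rewrite /hdist -[X in leq _ X]card_ord max_card. Qed.

End BinaryCodes.

Local Open Scope R_scope.

Lemma RplusA : associative Rplus. Proof. by move=> *; rewrite Rplus_assoc. Qed.
Lemma RmultA : associative Rmult. Proof. by move=> *; rewrite Rmult_assoc. Qed.
HB.instance Definition _ := Monoid.isComLaw.Build R 0 Rplus RplusA Rplus_comm Rplus_0_l.
HB.instance Definition _ := Monoid.isComLaw.Build R 1 Rmult RmultA Rmult_comm Rmult_1_l.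
HB.instance Definition _ := Monoid.isMulLaw.Build R 0 Rmult Rmult_0_l Rmult_0_r.
HB.instance Definition _ :=
  Monoid.isAddLaw.Build R Rmult Rplus Rmult_plus_distr_r Rmult_plus_distr_l.

Lemma Rsum_le (I : finType) (F G : I -> R) :
  (forall i, F i <= G i) -> \big[Rplus/0]_i F i <= \big[Rplus/0]_i G i.
Proof. by move=> FG; apply: (big_ind2 Rle) => // *; lra. Qed.

Lemma Rsum_const (I : finType) (c : R) : \big[Rplus/0]_(i : I) c = INR #|I| * c.
Proof.
rewrite big_const; elim: #|I| => [|m IH]; first by rewrite /=; lra.
by rewrite iterS IH S_INR; lra.
Qed.

Lemma card_mxF2 k n : INR #|{: 'M['F_2]_(k, n)}| = 2 ^ (muln k n).
Proof.
rewrite card_mx card_Fp //; elim: (muln k n) => [|m IH] //=.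
by rewrite expnS mult_INR IH.
Qed.

Lemma Rsum_col_mx k n (F : 'M['F_2]_(k.+1, n) -> R) :
  \big[Rplus/0]_(M : 'M['F_2]_(k.+1, n)) F M =
  \big[Rplus/0]_(B : 'M['F_2]_(k, n)) \big[Rplus/0]_(b : 'rV['F_2]_n) F (col_mx b B).
Proof.
rewrite exchange_big pair_big /=.
rewrite (reindex (fun bB : 'rV_n * 'M_(k, n) => (col_mx bB.1 bB.2 : 'M_(k.+1, n)))) //.
exists (fun M : 'M['F_2]_(1 + k, n) => (usubmx M, dsubmx M)) => [[b B] _ | M _] /=.
  by rewrite col_mxKu col_mxKd.
by rewrite vsubmxK.
Qed.

Lemma Rsum_mx0 n (F : 'M['F_2]_(0, n) -> R) :
  \big[Rplus/0]_(B : 'M['F_2]_(0, n)) F B = F (GRing.zero : 'M_(0, n)).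
Proof. by rewrite (big_pred1 GRing.zero) // => B; rewrite /= flatmx0 eqxx. Qed.

Lemma exp_le x y : x <= y -> exp x <= exp y.
Proof. by case/Rle_lt_or_eq_dec => [/exp_increasing/Rlt_le | ->]; [|apply: Rle_refl]. Qed.

Lemma Rpower2_ge1 x : 0 <= x -> 1 <= Rpower 2 x.
Proof. by move=> x0; rewrite -(Rpower_O 2); [apply: Rle_Rpower|]; lra. Qed.

Section SumOfA.
Variables (n : nat) (p eps : R).
Hypothesis eps_gt0 : 0 < eps.
Implicit Types (C : {set 'rV['F_2]_n}) (x b : 'rV['F_2]_n).

Definition Asum C : R := \big[Rplus/0]_x Aval p eps C x.

Lemma SvalE C : Sval p eps C = Asum C / 2 ^ n.
Proof. by rewrite /Sval card_mxF2 mul1n. Qed.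

Lemma Aval_ge1 C x : 1 <= Aval p eps C x.
Proof.
apply: Rpower2_ge1; have := pos_INR n; have := pos_INR (Lcount p C x) => *.
apply: Rmult_le_pos; last by apply/Rlt_le/Rinv_0_lt_compat; lra.
by apply: Rmult_le_pos => //; apply: Rmult_le_pos; lra.
Qed.

Lemma Sval_ge1 C : 1 <= Sval p eps C.
Proof.
have pos2n := pow_lt 2 n ltac:(lra).
rewrite SvalE; apply: (Rmult_le_reg_r (2 ^ n)) => //.
rewrite /Rdiv Rmult_assoc Rinv_l ?Rmult_1_l ?Rmult_1_r; last lra.
have := Rsum_le (fun x => Aval_ge1 C x); rewrite /Asum Rsum_const card_mxF2 mul1n; lra.
Qed.

Lemma Aval_col k b x (B : 'M['F_2]_(k, n)) :
  Aval p eps (span_code (col_mx b B : 'M_(1 + k, n))) x <=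
  Aval p eps (span_code B) x * Aval p eps (span_code B) (GRing.add x b).
Proof.
rewrite /Aval -Rpower_plus; apply: Rle_Rpower; first lra.
move/leP/le_INR: (Lcount_col p b x B); rewrite plus_INR => Lle.
have := pos_INR n; have : 0 < / (1 + eps) by apply: Rinv_0_lt_compat; lra.
rewrite /Rdiv -Rmult_plus_distr_r -Rmult_plus_distr_l => *.
by apply: Rmult_le_compat_r; [lra | apply: Rmult_le_compat_l => //; nra].
Qed.

(* Summing [A(x) A(x + b)] over both [b] and [x] gives exactly [Asum^2]. *)
Lemma Asum_col k (B : 'M['F_2]_(k, n)) :
  \big[Rplus/0]_b Asum (span_code (col_mx b B : 'M_(1 + k, n)))
  <= Asum (span_code B) * Asum (span_code B).
Proof.
apply: Rle_trans (_ : \big[Rplus/0]_b \big[Rplus/0]_x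
   (Aval p eps (span_code B) x * Aval p eps (span_code B) (GRing.add x b)) <= _).
  by apply: Rsum_le => b; apply: Rsum_le => x; apply: Aval_col.
rewrite exchange_big /= /Asum big_distrl /=; apply: Req_le; apply: eq_bigr => x _.
by rewrite big_distrr /= [RHS](reindex_inj (@GRing.addrI _ x)).
Qed.

Lemma Sval_col k (B : 'M['F_2]_(k, n)) :
  \big[Rplus/0]_b Sval p eps (span_code (col_mx b B : 'M_(1 + k, n)))
  <= 2 ^ n * (Sval p eps (span_code B) * Sval p eps (span_code B)).
Proof.
have pos2n := pow_lt 2 n ltac:(lra).
rewrite (eq_bigr _ (fun b _ => SvalE _)) /Rdiv -big_distrl /= SvalE.
have := Asum_col B; set T := Asum _ => ineq.
apply: Rle_trans (_ : T * T * / 2 ^ n <= _).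
  by apply: Rmult_le_compat_r => //; apply/Rlt_le/Rinv_0_lt_compat.
by right; field; lra.
Qed.

End SumOfA.

Section StoppedExcess.
Variables (n : nat) (p eps th : R).
Hypotheses (eps_gt0 : 0 < eps) (th_gt0 : 0 < th).

Definition excess k (B : 'M['F_2]_(k, n)) : R := Sval p eps (span_code B) - 1.

(* The excess stopped at the first prefix of rows where it reaches [th]; it is
   a supermartingale up to the factor [2 + th] per added row. *)
Fixpoint stopped_excess k : 'M['F_2]_(k, n) -> R :=
  match k with
  | 0 => fun B => Rmin (excess B) th
  | k'.+1 => fun M =>
      if Rlt_dec (stopped_excess (dsubmx (M : 'M_(1 + k', n)))) th
      then Rmin (excess M) th else th
  end.

Lemma excess_ge0 k (B : 'M['F_2]_(k, n)) : 0 <= excess B.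
Proof. by have := Sval_ge1 p eps_gt0 (span_code B); rewrite /excess; lra. Qed.

Lemma stopped_excess_ge0 k (B : 'M['F_2]_(k, n)) : 0 <= stopped_excess B.
Proof.
case: k B => [|k] B /=; last destruct Rlt_dec => /=; try lra;
  by apply: Rmin_glb; [apply: excess_ge0 | lra].
Qed.

Lemma stopped_excess_capped k (B : 'M['F_2]_(k, n)) :
  th <= excess B -> stopped_excess B = th.
Proof. by case: k B => [|k] B /=; last destruct Rlt_dec; move=> *; rewrite ?Rmin_right. Qed.

Lemma Rsum_excess_col k (B : 'M['F_2]_(k, n)) :
  \big[Rplus/0]_(b : 'rV['F_2]_n) excess (col_mx b B : 'M_(1 + k, n))
  <= 2 ^ n * ((2 + excess B) * excess B).
Proof.
rewrite /excess /Rminus big_split /= Rsum_const card_mxF2 mul1n.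
apply: Rle_trans (Rplus_le_compat_r _ _ _ (Sval_col p eps_gt0 B)) _.
by right; ring.
Qed.

Lemma stopped_excess_running k (B : 'M['F_2]_(k, n)) :
  stopped_excess B < th -> stopped_excess B = excess B.
Proof.
by case: k B => [|k] B /=; last destruct Rlt_dec => /=; try lra;
  rewrite /Rmin; destruct Rle_dec; lra.
Qed.

Lemma Rsum_stopped_excess_col k (B : 'M['F_2]_(k, n)) :
  \big[Rplus/0]_(b : 'rV['F_2]_n) stopped_excess (col_mx b B : 'M_(k.+1, n))
  <= 2 ^ n * ((2 + th) * stopped_excess B).
Proof.
have pos2n := pow_lt 2 n ltac:(lra).
have Phi_ge0 := stopped_excess_ge0 B.
under eq_bigr => b _ do rewrite /= col_mxKd.
destruct (Rlt_dec (stopped_excess B) th) as [running | stopped] => /=; last first.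
  by rewrite Rsum_const card_mxF2 mul1n; apply: Rmult_le_compat_l; nra.
apply: Rle_trans (Rsum_le (fun b => Rmin_l _ th)) _.
apply: Rle_trans (Rsum_excess_col B) _.
by rewrite -(stopped_excess_running running); apply: Rmult_le_compat_l; nra.
Qed.

Lemma Rsum_stopped_excess k :
  \big[Rplus/0]_(B : 'M['F_2]_(k, n)) stopped_excess B
  <= (2 ^ n * (2 + th)) ^ k * excess (GRing.zero : 'M_(0, n)).
Proof.
have pos2n := pow_lt 2 n ltac:(lra).
elim: k => [|k IH]; first by rewrite Rsum_mx0 /= Rmult_1_l; apply: Rmin_l.
rewrite Rsum_col_mx; apply: Rle_trans (Rsum_le (@Rsum_stopped_excess_col k)) _.
rewrite -!big_distrr /= Rmult_assoc -Rmult_assoc.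
by apply: Rmult_le_compat_l => //; nra.
Qed.

End StoppedExcess.

Lemma prob_bad_le n k p eps th : 0 < eps -> 0 < th -> th <= 1 ->
  prob_bad n k p eps <= (2 + th) ^ k * excess p eps (GRing.zero : 'M_(0, n)) / th.
Proof.
move=> eps_gt0 th_gt0 th_le1.
have pos2nk := pow_lt (2 ^ n) k (pow_lt 2 n ltac:(lra)).
rewrite /prob_bad card_mxF2 mulnC pow_mult.
apply: (Rmult_le_reg_r ((2 ^ n) ^ k)) => //.
rewrite /Rdiv Rmult_assoc Rinv_l ?Rmult_1_r; last lra.
apply: (Rmult_le_reg_l th) => //; rewrite big_distrr /=.
apply: Rle_trans (Rsum_le (G := @stopped_excess n p eps th k) _) _.
  move=> B; destruct Rle_dec as [good | bad] => /=.
    by rewrite Rmult_0_r; apply: stopped_excess_ge0.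
  by rewrite Rmult_1_r stopped_excess_capped //; rewrite /excess; lra.
apply: Rle_trans (Rsum_stopped_excess n p eps_gt0 th_gt0 k) _.
by rewrite Rpow_mult_distr; apply: Req_le; field; lra.
Qed.

Lemma Hbin_ln2 p : Hbin p * ln 2 = - p * ln p - (1 - p) * ln (1 - p).
Proof. by have := ln_lt_2; rewrite /Hbin /log2 => ?; field; lra. Qed.

Lemma Hbin_ge0 p : 0 < p < 1 -> 0 <= Hbin p.
Proof.
move=> [p_gt0 p_lt1]; have ln2_gt0 := ln_lt_2.
have lnp : ln p < 0 by rewrite -ln_1; apply: ln_increasing; lra.
have lnq : ln (1 - p) < 0 by rewrite -ln_1; apply: ln_increasing; lra.
apply: (Rmult_le_reg_r (ln 2)); rewrite ?Hbin_ln2; nra.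
Qed.

Section HammingBall.
Local Open Scope ring_scope.
Local Open Scope R_scope.
Variables (n : nat) (p : R).
Hypotheses (p_gt0 : 0 < p) (p_lt_half : p < / 2).

(* The product Bernoulli(p) measure: it has mass at least [2^(-H(p) n)] at
   every point of the ball of radius [p n], which bounds the ball's volume. *)
Definition bernoulli_wt (x : 'rV['F_2]_n) : R :=
  \big[Rmult/1]_(i : 'I_n) (if x ord0 i == GRing.zero then 1 - p else p).

Lemma Rsum_bernoulli_wt : \big[Rplus/0]_(x : 'rV['F_2]_n) bernoulli_wt x = 1.
Proof.
rewrite /bernoulli_wt (reindex (fun phi : {ffun 'I_n -> 'F_2} => \row_i phi i)) /=; last first.
  exists (fun x : 'rV['F_2]_n => [ffun i => x ord0 i]) => [phi _ | x _].
    by apply/ffunP => i; rewrite ffunE mxE.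
  by apply/rowP => i; rewrite mxE ffunE.
under eq_bigr => phi _ do under eq_bigr => i _ do rewrite mxE.
rewrite -(bigA_distr_bigA (fun i (a : 'F_2) => if a == GRing.zero then 1 - p else p)).
rewrite big1 // => i _; rewrite (bigD1 GRing.zero) //= (big_pred1 (GRing.one _)) /=.
  by lra.
by move=> a; case: (F2_cases a) => ->.
Qed.

Lemma bernoulli_wtE x :
  bernoulli_wt x = p ^ hdist x GRing.zero * (1 - p) ^ (n - hdist x GRing.zero).
Proof.
rewrite /bernoulli_wt (bigID (fun i => x ord0 i != GRing.zero)) /=.
rewrite (eq_bigr (fun=> p)) => [|i /negbTE ->] //.
rewrite [X in _ * X](eq_bigr (fun=> 1 - p)) => [|i /negPn ->] //.
have card_supp : #|(fun i : 'I_n => x ord0 i != GRing.zero)| = hdist x GRing.zero.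
  by apply: eq_card => i; rewrite inE mxE.
have card_zeros :
    #|(fun i : 'I_n => ~~ (x ord0 i != GRing.zero))| = subn n (hdist x GRing.zero).
  have := cardC (fun i : 'I_n => x ord0 i != GRing.zero).
  rewrite card_ord card_supp => cardE; apply: (@addnI (hdist x GRing.zero)).
  by rewrite subnKC ?hdist_le // -[RHS]cardE.
have iter_pow c m : iter m (Rmult c) 1 = c ^ m by elim: m => //= m ->.
by rewrite !big_const !iter_pow; congr (_ ^ _ * _ ^ _).
Qed.

Lemma bernoulli_wt_ball x : INR (hdist x GRing.zero) <= p * INR n ->
  exp (- (INR n * Hbin p * ln 2)) <= bernoulli_wt x.
Proof.
move=> x_in_ball; rewrite bernoulli_wtE.
have w_le_n := hdist_le x GRing.zero; set w := hdist x GRing.zero in x_in_ball w_le_n *.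
rewrite -!Rpower_pow; try lra.
rewrite /Rpower -exp_plus minus_INR; last exact/leP.
apply: exp_le; rewrite Rmult_assoc Hbin_ln2.
have lnp_lt : ln p < ln (1 - p) by apply: ln_increasing; lra.
have := pos_INR w; nra.
Qed.

Lemma Rsum_ball_le :
  \big[Rplus/0]_(x : 'rV['F_2]_n)
     (if Rle_dec (INR (hdist x GRing.zero)) (p * INR n) then 1 else 0)
  <= exp (INR n * Hbin p * ln 2).
Proof.
have pos_exp := exp_pos (- (INR n * Hbin p * ln 2)).
apply: (Rmult_le_reg_r (exp (- (INR n * Hbin p * ln 2)))) => //.
rewrite -exp_plus Rplus_opp_r exp_0 big_distrl /= -[X in _ <= X]Rsum_bernoulli_wt.
apply: Rsum_le => x; destruct Rle_dec as [x_in_ball | x_out] => /=.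
  by rewrite Rmult_1_l; apply: bernoulli_wt_ball.
rewrite Rmult_0_l; apply: (big_ind (Rle 0)) => [| * |i _]; try nra.
by case: ifP => _; lra.
Qed.

End HammingBall.

Lemma excess_empty_le n p eps : 0 < eps -> 0 < p -> p < / 2 ->
  excess p eps (GRing.zero : 'M_(0, n))
  <= exp ((eps / (1 + eps) + Hbin p - 1) * INR n * ln 2).
Proof.
move=> eps_gt0 p_gt0 p_lt_half.
set E := Rpower 2 (eps * INR n * 1 / (1 + eps)).
set V := \big[Rplus/0]_(x : 'rV['F_2]_n)
  (if Rle_dec (INR (hdist x GRing.zero)) (p * INR n) then 1 else 0).
have E_ge1 : 1 <= E.
  apply: Rpower2_ge1; have := pos_INR n => n_ge0.
  by rewrite /Rdiv Rmult_1_r; apply: Rmult_le_pos; [nra | apply/Rlt_le/Rinv_0_lt_compat; lra].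
have Asum_le : Asum p eps (span_code (GRing.zero : 'M_(0, n))) <= 2 ^ n + E * V.
  apply: Rle_trans (Rsum_le (G := fun x => 1 + E *
    (if Rle_dec (INR (hdist x GRing.zero)) (p * INR n) then 1 else 0)) _) _.
    move=> x; rewrite /Aval Lcount_empty /E.
    by destruct Rle_dec => /=; rewrite /Rdiv ?Rmult_0_r ?Rmult_0_l ?Rpower_O; lra.
  by rewrite big_split /= Rsum_const card_mxF2 mul1n -big_distrr /= Rmult_1_r; apply: Rle_refl.
have pos2n := pow_lt 2 n ltac:(lra).
have V_le := Rsum_ball_le n p_gt0 p_lt_half; rewrite -/V in V_le.
apply: Rle_trans (_ : E * V / 2 ^ n <= _).
  rewrite /excess SvalE; apply: Rle_trans (_ : (2 ^ n + E * V) / 2 ^ n - 1 <= _).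
    by apply/Rplus_le_compat_r/Rmult_le_compat_r => //; apply/Rlt_le/Rinv_0_lt_compat.
  by right; field; lra.
rewrite -(Rpower_pow n) ?/E /Rpower; try lra.
apply: Rle_trans (_ : exp (eps * INR n * 1 / (1 + eps) * ln 2) * exp (INR n * Hbin p * ln 2)
                     / exp (INR n * ln 2) <= _).
  apply: Rmult_le_compat_r; first by apply/Rlt_le/Rinv_0_lt_compat/exp_pos.
  by apply: Rmult_le_compat_l; [apply/Rlt_le/exp_pos | lra].
by rewrite /Rdiv -exp_Ropp -!exp_plus; apply: Req_le; congr exp; field; lra.
Qed.

Lemma pow_2_plus_le th k : 0 <= th -> (2 + th) ^ k <= exp (INR k * (ln 2 + th / 2)).
Proof.
move=> th_ge0.
have le_exp : 2 + th <= exp (ln 2 + th / 2).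
  by rewrite exp_plus exp_ln; [have := exp_ineq1_le (th / 2); lra | lra].
apply: Rle_trans (pow_incr _ _ k (conj _ le_exp)) _; first lra.
by rewrite -Rpower_pow ?/Rpower ?ln_exp; [apply: Rle_refl | apply: exp_pos].
Qed.

(* With [k = (1 - H(p) - eps) n] the powers of [2] cancel up to the gap
   [eps - eps / (1 + eps)] in the rate. *)
Lemma prob_bad_le_exp n k p eps th :
  0 < eps -> 0 < p -> p < / 2 -> 0 < th <= 1 ->
  INR k = (1 - Hbin p - eps) * INR n ->
  prob_bad n k p eps <= exp (- ((eps * eps / (1 + eps) * ln 2 - th / 2) * INR n)) / th.
Proof.
move=> eps_gt0 p_gt0 p_lt_half [th_gt0 th_le1] k_eq.
have k_le_n : INR k <= INR n.
  have p_lt1 : p < 1 by lra.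
  by have := Hbin_ge0 (conj p_gt0 p_lt1); have := pos_INR n; rewrite k_eq; nra.
apply: Rle_trans (prob_bad_le n k p eps_gt0 th_gt0 th_le1) _.
apply: Rmult_le_compat_r; first by apply/Rlt_le/Rinv_0_lt_compat.
have e0_ge0 := excess_ge0 p eps_gt0 (GRing.zero : 'M_(0, n)).
apply: Rle_trans (Rmult_le_compat _ _ _ _ _ e0_ge0 (pow_2_plus_le k (Rlt_le _ _ th_gt0))
  (excess_empty_le n eps_gt0 p_gt0 p_lt_half)) _; first by apply: pow_le; lra.
rewrite -exp_plus; apply: exp_le.
have -> : INR k * (ln 2 + th / 2) + (eps / (1 + eps) + Hbin p - 1) * INR n * ln 2
          = INR k * th / 2 - eps * eps / (1 + eps) * ln 2 * INR n.
  by rewrite Rmult_plus_distr_l k_eq; field; lra.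
have k_th_le : INR k * th <= INR n * th by apply: Rmult_le_compat_r; lra.
lra.
Qed.

Lemma exp_decay_div_le g th m : 0 < g -> 0 < th -> / (g * th) <= m ->
  exp (- (2 * g * m)) / th <= exp (- (g * m)).
Proof.
move=> g_gt0 th_gt0 m_large.
have gth_gt0 : 0 < g * th by apply: Rmult_lt_0_compat.
have th_ge : / th <= exp (g * m).
  apply: Rle_trans (exp_ineq1_le (g * m)).
  have : g * th * / (g * th) = 1 by apply: Rinv_r; lra.
  have : g * th * / (g * th) <= g * th * m by apply: Rmult_le_compat_l; lra.
  have : / th * th = 1 by apply: Rinv_l; lra.
  have := Rinv_0_lt_compat _ th_gt0; nra.
have -> : - (2 * g * m) = - (g * m) + - (g * m) by ring.
rewrite exp_plus /Rdiv Rmult_assoc -[X in _ <= X]Rmult_1_r.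
apply: Rmult_le_compat_l; first exact/Rlt_le/exp_pos.
have : exp (- (g * m)) * exp (g * m) = 1 by rewrite -exp_plus Rplus_opp_l exp_0.
by have := exp_pos (- (g * m)); nra.
Qed.

(* Inside [R_scope], [(N <= n)%N] below would not parse as a comparison of naturals. *)
Local Close Scope R_scope.

Theorem lemma2 (eps p : R) :
  (0 < eps)%R -> (0 < p)%R -> (p < / 2)%R ->
  exists c : R, (0 < c)%R /\ exists N : nat,
    forall n k : nat, (N <= n)%N ->
      INR k = ((1 - Hbin p - eps) * INR n)%R ->
      (prob_bad n k p eps <= exp (- (c * INR n)))%R.
Proof.
Local Open Scope R_scope.
move=> eps_gt0 p_gt0 p_lt_half.
set rate := eps * eps / (1 + eps) * ln 2.
have rate_gt0 : 0 < rate.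
  have := ln_lt_2 => ln2_gt.
  by apply: Rmult_lt_0_compat; [apply: Rdiv_lt_0_compat | ]; nra.
set th := Rmin 1 rate.
have th_gt0 : 0 < th by apply: Rmin_glb_lt; lra.
have th_le : th <= 1 /\ th <= rate by split; [apply: Rmin_l | apply: Rmin_r].
exists (rate / 4); split; first lra.
have [N N_large] := INR_unbounded (/ (rate / 4 * th)).
exists N => n k /leP /le_INR n_ge k_eq.
apply: Rle_trans (prob_bad_le_exp eps_gt0 p_gt0 p_lt_half (conj th_gt0 _) k_eq) _; first lra.
apply: Rle_trans (exp_decay_div_le (g := rate / 4) _ th_gt0 _); [| lra | lra].
apply: Rmult_le_compat_r; first by apply/Rlt_le/Rinv_0_lt_compat.
by apply: exp_le; have := pos_INR n; rewrite -/rate; nra.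
Qed.
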